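(* Let $\widetilde{\Sigma}_1,\widetilde{\Sigma}_2$ be disjoint visibly pushdown alphabets, $\widetilde{\Sigma}=\widetilde{\Sigma}_1\uplus\widetilde{\Sigma}_2$, and $P_1\subseteq\widetilde{\Sigma}_1^*$, $P_2\subseteq\widetilde{\Sigma}_2^*$ well-matched visibly pushdown languages. If $\prec$ is a contextual order on $\widetilde{\Sigma}$ that is both visibly pushdown and coherent, then $\mathrm{red}_\prec(P_1\parallel P_2)$ is a visibly pushdown language and every word in it is well-nested.
   Context: A visibly pushdown (VP) alphabet is a finite alphabet partitioned into calls, returns and internals; write $\Sigma^{\mathsf{call}}_i,\Sigma^{\mathsf{ret}}_i$ for the calls and returns of $\widetilde{\Sigma}_i$; $\widetilde{\Sigma}$ has as calls/returns/internals the unions. Calls and returns in a word are matched like opening and closing parentheses (internals ignored); unmatched ones are pending; a word is well-matched if none are pending. A visibly pushdown automaton (VPA) is a pushdown automaton with bottom symbol $\bot$ that pushes one non-$\bot$ symbol on each call, pops the top on each return (reading $\bot$ on empty stack without removing it), and leaves the stack unchanged on internals; visibly pushdown languages are those accepted by VPAs. Shuffle: $P_1\parallel P_2=\{w\in\widetilde{\Sigma}^*:\Pi_{\widetilde{\Sigma}_i}(w)\in P_i\}$, $\Pi_{\widetilde{\Sigma}_i}$ erasing letters outside $\widetilde{\Sigma}_i$. A word is well-nested if every matched call–return pair consists of letters from the same $\widetilde{\Sigma}_k$. $\mathbb{I}=\{(a,b):a\in\widetilde{\Sigma}_i,b\in\widetilde{\Sigma}_j,i\ne j\}$, $\equiv_{\mathbb{I}}$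 the least reflexive transitive relation with $uabv\equiv_{\mathbb{I}}ubav$ for $(a,b)\in\mathbb{I}$. A contextual order is a map $\prec$ from $\widetilde{\Sigma}^*$ to strict total orders on $\widetilde{\Sigma}$; it induces $\preceq$: $\sigma\preceq\rho$ iff $\sigma$ is a prefix of $\rho$ or $\sigma=\alpha a\beta$, $\rho=\alpha b\gamma$ with $a\prec_\alpha b$. $\mathrm{red}_\prec(L)=\{w\in L:\forall u\in L,(u\equiv_{\mathbb{I}}w\wedge u\preceq w)\Rightarrow u=w\}$. $\prec$ is visibly pushdown if there is a complete deterministic VPA $A$ over $\widetilde{\Sigma}$ and a map $\mathsf{ord}$ from its states to strict total orders on $\widetilde{\Sigma}$ with $\prec_w=\mathsf{ord}(q)$, $q$ the state reached by $A$ after reading $w$. $\prec$ is coherent if for every $u\in\widetilde{\Sigma}^*$ and $i\in\{1,2\}$: if $u$ has pending calls and the last one is in $\Sigma^{\mathsf{call}}_i$, then $a\prec_u r$ for all $a\in\widetilde{\Sigma}_i$, $r\in\bigcup_{j\ne i}\Sigma^{\mathsf{ret}}_j$. *)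

From mathcomp Require Import all_boot.
Set Implicit Arguments. Unset Strict Implicit. Unset Printing Implicit Defensive.

Inductive vkind := VCall | VRet | VInt.

Definition is_call (k : vkind) : bool := if k is VCall then true else false.
Definition is_ret (k : vkind) : bool := if k is VRet then true else false.

Section VPA.
Variables (Sigma : finType) (kind : Sigma -> vkind).

(* A (nondeterministic) visibly pushdown automaton. The stack is a list of
   non-bottom symbols of Gam; the empty list represents the bottom symbol. *)
Record VPA := {
  vQ : finType;
  vGam : finType;
  vinit : {set vQ};
  vfinal : {set vQ};
  vcall : vQ -> Sigma -> vQ -> vGam -> bool;      (* q -a/push g-> q' *)
  vret : vQ -> Sigma -> option vGam -> vQ -> bool; (* None = reading bottom *)
  vint : vQ -> Sigma -> vQ -> bool
}.

Inductive vreach (A : VPA) : vQ A -> seq (vGam A) -> seq Sigma -> vQ A -> seq (vGam A) -> Prop :=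
| vr_nil q s : vreach q s [::] q s
| vr_call q s a w q1 g q2 s2 :
    kind a = VCall -> vcall q a q1 g -> vreach q1 (g :: s) w q2 s2 ->
    vreach q s (a :: w) q2 s2
| vr_ret q g s a w q1 q2 s2 :
    kind a = VRet -> vret q a (Some g) q1 -> vreach q1 s w q2 s2 ->
    vreach q (g :: s) (a :: w) q2 s2
| vr_ret_bot q a w q1 q2 s2 :
    kind a = VRet -> vret q a None q1 -> vreach q1 [::] w q2 s2 ->
    vreach q [::] (a :: w) q2 s2
| vr_int q s a w q1 q2 s2 :
    kind a = VInt -> vint q a q1 -> vreach q1 s w q2 s2 ->
    vreach q s (a :: w) q2 s2.

Definition vaccepts (A : VPA) (w : seq Sigma) : Prop :=
  exists q0 q s, q0 \in vinit A /\ vreach q0 [::] w q s /\ q \in vfinal A.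

Definition VPL (L : seq Sigma -> Prop) : Prop :=
  exists A : VPA, forall w, L w <-> vaccepts A w.

Record DVPA := {
  dQ : finType;
  dGam : finType;
  dinit : dQ;
  dcall : dQ -> Sigma -> dQ * dGam;
  dret : dQ -> Sigma -> option dGam -> dQ;
  dint : dQ -> Sigma -> dQ
}.

Fixpoint drun (A : DVPA) (q : dQ A) (s : seq (dGam A)) (w : seq Sigma) : dQ A :=
  match w with
  | [::] => q
  | a :: w' =>
    match kind a with
    | VCall => let: (q', g) := dcall q a in drun q' (g :: s) w'
    | VRet => match s with
              | g :: s' => drun (dret q a (Some g)) s' w'
              | [::] => drun (dret q a None) [::] w'
              end
    | VInt => drun (dint q a) s w'
    end
  end.

Definition dstate (A : DVPA) (w : seq Sigma) : dQ A := drun (dinit A) [::] w.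

Fixpoint pend_aux (st : seq Sigma) (w : seq Sigma) : seq Sigma :=
  match w with
  | [::] => st
  | a :: w' =>
    match kind a with
    | VCall => pend_aux (a :: st) w'
    | VRet => pend_aux (behead st) w'
    | VInt => pend_aux st w'
    end
  end.

Definition pending_calls (w : seq Sigma) : seq Sigma := pend_aux [::] w.

Fixpoint pret_aux (st : seq Sigma) (w : seq Sigma) : nat :=
  match w with
  | [::] => 0
  | a :: w' =>
    match kind a with
    | VCall => pret_aux (a :: st) w'
    | VRet => if st is _ :: st' then pret_aux st' w' else (pret_aux [::] w').+1
    | VInt => pret_aux st w'
    end
  end.

Definition well_matched (w : seq Sigma) : bool :=
  (pending_calls w == [::]) && (pret_aux [::] w == 0).

Fixpoint wn_aux (side : Sigma -> bool) (st : seq Sigma) (w : seq Sigma) : bool :=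
  match w with
  | [::] => true
  | a :: w' =>
    match kind a with
    | VCall => wn_aux side (a :: st) w'
    | VRet => if st is c :: st' then (side c == side a) && wn_aux side st' w'
              else wn_aux side [::] w'
    | VInt => wn_aux side st w'
    end
  end.

Definition well_nested (side : Sigma -> bool) (w : seq Sigma) : bool :=
  wn_aux side [::] w.

End VPA.

Section Shuffle.
Variables (S1 S2 : finType) (k1 : S1 -> vkind) (k2 : S2 -> vkind).

Definition sumk (a : S1 + S2) : vkind :=
  match a with inl x => k1 x | inr y => k2 y end.

Definition side (a : S1 + S2) : bool := if a is inl _ then true else false.

Definition getl (a : S1 + S2) : option S1 := if a is inl x then Some x else None.
Definition getr (a : S1 + S2) : option S2 := if a is inr y then Some y else None.

Definition proj1w (w : seq (S1 + S2)) : seq S1 := pmap getl w.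
Definition proj2w (w : seq (S1 + S2)) : seq S2 := pmap getr w.

Definition shuffle (P1 : seq S1 -> Prop) (P2 : seq S2 -> Prop) (w : seq (S1 + S2)) : Prop :=
  P1 (proj1w w) /\ P2 (proj2w w).

Definition indep (a b : S1 + S2) : bool := side a != side b.

Inductive swap1 : seq (S1 + S2) -> seq (S1 + S2) -> Prop :=
| swap1_intro u a b v : indep a b -> swap1 (u ++ a :: b :: v) (u ++ b :: a :: v).

Inductive equivI : seq (S1 + S2) -> seq (S1 + S2) -> Prop :=
| eqI_refl w : equivI w w
| eqI_step u v w : swap1 u v -> equivI v w -> equivI u w.

End Shuffle.

Section Orders.
Variable Sigma : finType.

Definition strict_total (r : rel Sigma) : Prop :=
  irreflexive r /\ transitive r /\ (forall a b, a != b -> r a b || r b a).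

Definition contextual_order (prec : seq Sigma -> rel Sigma) : Prop :=
  forall u, strict_total (prec u).

Definition preceq (prec : seq Sigma -> rel Sigma) (s r : seq Sigma) : Prop :=
  prefix s r \/
  exists al a be b ga, s = al ++ a :: be /\ r = al ++ b :: ga /\ prec al a b.

Definition red (prec : seq Sigma -> rel Sigma) (equiv : seq Sigma -> seq Sigma -> Prop)
  (L : seq Sigma -> Prop) (w : seq Sigma) : Prop :=
  L w /\ forall u, L u -> equiv u w -> preceq prec u w -> u = w.

Definition vp_order (kind : Sigma -> vkind) (prec : seq Sigma -> rel Sigma) : Prop :=
  exists (A : DVPA Sigma) (ord : dQ A -> rel Sigma),
    (forall q, strict_total (ord q)) /\ forall w, prec w = ord (@dstate Sigma kind A w).

End Orders.

Definition coherent (S1 S2 : finType) (k1 : S1 -> vkind) (k2 : S2 -> vkind)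
  (prec : seq (S1 + S2) -> rel (S1 + S2)) : Prop :=
  forall u c rest, pending_calls (sumk k1 k2) u = c :: rest ->
    forall a r, side a = side c -> sumk k1 k2 r = VRet -> side r != side c ->
      prec u a r.

From Pilot Require Import Defs.
From mathcomp Require Import all_boot.
From Stdlib Require Import Setoid.
Set Implicit Arguments. Unset Strict Implicit. Unset Printing Implicit Defensive.

(* Since ≡_I only commutes adjacent letters of different alphabets, a word of
   the shuffle is ≺-minimal in its class iff it has no inversion: no factor
   b x a where x is a block of letters on the side of b, a is on the other side
   and a ≺ b in the context of b (moving a in front of b would give a smaller
   equivalent word).  Around a return matched with a call of the other
   alphabet, coherence produces such an inversion, so reduced words are
   well-nested.  On well-nested words each component automaton can run on the
   common stack, and inversions are detected by the deterministic automaton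
   computing ≺, enriched with the side of the current block and the set of
   letters this block forbids; the reduced language is the intersection of
   these visibly pushdown languages. *)

Lemma filter_eq_cons (T : eqType) (p : pred T) (v : seq T) a t :
  filter p v = a :: t -> exists x y, [/\ v = x ++ a :: y, all (predC p) x & p a].
Proof.
elim: v => [//|b v IH] /=; case pb: (p b).
  by case=> <- _; exists [::], v; rewrite pb.
by case/IH=> x [y [-> px pa]]; exists (b :: x), y; rewrite /= pb.
Qed.

Section Runs.
Variables (Sigma : finType) (kind : Sigma -> vkind).
Local Notation vreach := (vreach kind).

Lemma vreach_nilE (A : VPA Sigma) (q : vQ A) s q' s' :
  vreach q s [::] q' s' -> q' = q /\ s' = s.
Proof. by move=> H; inversion H. Qed.

Lemma vreach_consE (A : VPA Sigma) (q : vQ A) s a w q' s' :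
  vreach q s (a :: w) q' s' ->
  match kind a with
  | VCall => exists q1 g, vcall q a q1 g /\ vreach q1 (g :: s) w q' s'
  | VRet => match s with
            | g :: s0 => exists q1, vret q a (Some g) q1 /\ vreach q1 s0 w q' s'
            | [::] => exists q1, vret q a None q1 /\ vreach q1 [::] w q' s'
            end
  | VInt => exists q1, vint q a q1 /\ vreach q1 s w q' s'
  end.
Proof.
by move=> H; inversion H; subst;
  match goal with ka : kind a = _ |- _ => rewrite ka end; eauto.
Qed.

Lemma pend_aux_cat st u v : pend_aux kind st (u ++ v) = pend_aux kind (pend_aux kind st u) v.
Proof. by elim: u st => [|a u IH] st //=; case: (kind a). Qed.

Lemma wn_aux_cat side st u v :
  wn_aux kind side st (u ++ v) =
    wn_aux kind side st u && wn_aux kind side (pend_aux kind st u) v.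
Proof.
elim: u st => [|a u IH] st //=; case: (kind a) => //; case: st => [|c st] //=.
by rewrite IH andbA.
Qed.

Lemma filter_pend_aux side s st u :
  wn_aux kind side st u ->
  [seq z <- pend_aux kind st u | side z == s] =
  pend_aux kind [seq z <- st | side z == s] [seq z <- u | side z == s].
Proof.
elim: u st => [|a u IH] st //=.
case sa: (side a == s); case ka: (kind a) => //=; rewrite ?ka.
- by move/IH => ->; rewrite /= sa.
- case: st => [|c st] /=; first by move/IH.
  by case/andP=> /eqP ca /IH ->; rewrite ca sa.
- by move/IH.
- by move/IH => ->; rewrite /= sa.
- case: st => [|c st] /=; first by move/IH.
  by case/andP=> /eqP ca /IH ->; rewrite ca sa.
- by move/IH.
Qed.

End Runs.

Lemma pend_aux_map (S T : finType) (kS : S -> vkind) (kT : T -> vkind) (f : S -> T) :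
  (forall y, kT (f y) = kS y) ->
  forall st x, pend_aux kT (map f st) (map f x) = map f (pend_aux kS st x).
Proof.
move=> kf st x; elim: x st => [|a x IH] st //=.
by rewrite kf; case: (kS a) => //; rewrite -IH; case: st.
Qed.

Section VisiblyPushdown.
Variables (Sigma : finType) (kind : Sigma -> vkind).
Local Notation vreach := (vreach kind).

Lemma VPL_ext (L L' : seq Sigma -> Prop) :
  (forall w, L w <-> L' w) -> VPL kind L -> VPL kind L'.
Proof. by move=> LL' [A HA]; exists A => w; split=> [/LL'/HA | /HA/LL']. Qed.

Definition vpa_inter (A B : VPA Sigma) : VPA Sigma := {|
  vQ := (vQ A * vQ B)%type;
  vGam := (vGam A * vGam B)%type;
  vinit := setX (vinit A) (vinit B);
  vfinal := setX (vfinal A) (vfinal B);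
  vcall := fun q a q' g => vcall q.1 a q'.1 g.1 && vcall q.2 a q'.2 g.2;
  vret := fun q a og q' =>
    vret q.1 a (omap fst og) q'.1 && vret q.2 a (omap snd og) q'.2;
  vint := fun q a q' => vint q.1 a q'.1 && vint q.2 a q'.2 |}.

Section Intersection.
Variables A B : VPA Sigma.

Lemma vreach_inter_proj (q : vQ (vpa_inter A B)) s w q' s' :
  vreach q s w q' s' ->
  vreach q.1 (map fst s) w q'.1 (map fst s') /\
  vreach q.2 (map snd s) w q'.2 (map snd s').
Proof.
elim=> {q s w q' s'} [q s|q s a w q1 g q2 s2|q g s a w q1 q2 s2|q a w q1 q2 s2
  |q s a w q1 q2 s2];
  [by split; apply: vr_nil | | | |] => ka /andP [t1 t2] _ [r1 r2].
- by split; [apply: vr_call r1 | apply: vr_call r2].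
- by split; [apply: vr_ret r1 | apply: vr_ret r2].
- by split; [apply: vr_ret_bot r1 | apply: vr_ret_bot r2].
- by split; [apply: vr_int r1 | apply: vr_int r2].
Qed.

Lemma vreach_inter_zip (q1 : vQ A) (q2 : vQ B) s1 s2 w q1' q2' s1' s2' :
  vreach q1 s1 w q1' s1' -> vreach q2 s2 w q2' s2' -> size s1 = size s2 ->
  vreach (A := vpa_inter A B) (q1, q2) (zip s1 s2) w (q1', q2') (zip s1' s2').
Proof.
move=> r1; elim: r1 q2 s2 => {q1 s1 w q1' s1'}
  [q s|q s a w q1 g q2 s2|q g s a w q1 q2 s2|q a w q1 q2 s2|q s a w q1 q2 s2].
- by move=> q2 s2 /vreach_nilE [-> ->] _; apply: vr_nil.
- move=> ka t1 _ IH p2 t2 /vreach_consE; rewrite ka => [[p1 [h [u2 r2]]]] sz.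
  by apply: vr_call ka _ (IH _ (h :: t2) r2 _); rewrite /= ?sz ?t1.
- move=> ka t1 _ IH p2 [|h t2] /vreach_consE; rewrite ka => [[p1 [u2 r2]]] // [sz].
  by apply: vr_ret ka _ (IH _ _ r2 sz); rewrite /= t1.
- move=> ka t1 _ IH p2 [|//] /vreach_consE; rewrite ka => [[p1 [u2 r2]]] _.
  by apply: vr_ret_bot ka _ (IH _ [::] r2 erefl); rewrite /= t1.
- move=> ka t1 _ IH p2 t2 /vreach_consE; rewrite ka => [[p1 [u2 r2]]] sz.
  by apply: vr_int ka _ (IH _ _ r2 sz); rewrite /= t1.
Qed.

End Intersection.

Lemma VPL_inter (L1 L2 : seq Sigma -> Prop) :
  VPL kind L1 -> VPL kind L2 -> VPL kind (fun w => L1 w /\ L2 w).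
Proof.
move=> [A HA] [B HB]; exists (vpa_inter A B) => w; split.
  move=> [/HA [i1 [f1 [s1 [i1A [r1 f1A]]]]] /HB [i2 [f2 [s2 [i2B [r2 f2B]]]]]].
  exists (i1, i2), (f1, f2), (zip s1 s2).
  split; last split; first by rewrite [vinit _]/= in_setX i1A.
  - exact: vreach_inter_zip r1 r2 _.
  - by rewrite [vfinal _]/= in_setX f1A.
move=> [[i1 i2] [[f1 f2] [s [iAB [/vreach_inter_proj [/= r1 r2] fAB]]]]].
move: iAB fAB; rewrite [vinit _]/= [vfinal _]/= !in_setX => /andP [i1A i2B] /andP [f1A f2B].
by split; [apply/HA | apply/HB]; do 3 eexists; split; eauto.
Qed.

Definition dstep (D : DVPA Sigma) (c : dQ D * seq (dGam D)) (a : Sigma) :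
    dQ D * seq (dGam D) :=
  match kind a with
  | VCall => let: (q, g) := dcall c.1 a in (q, g :: c.2)
  | VRet => if c.2 is g :: s then (dret c.1 a (Some g), s) else (dret c.1 a None, [::])
  | VInt => (dint c.1 a, c.2)
  end.

Lemma drunE (D : DVPA Sigma) q s w : drun kind q s w = (foldl (@dstep D) (q, s) w).1.
Proof.
elim: w q s => [|a w IH] q s //=; rewrite /dstep; case: (kind a) => //.
- by case: (dcall q a).
- by case: s.
Qed.

Definition vpa_of_dvpa (D : DVPA Sigma) (fin : {set dQ D}) : VPA Sigma := {|
  vQ := dQ D; vGam := dGam D; vinit := [set dinit D]; vfinal := fin;
  vcall := fun q a q' g => dcall q a == (q', g);
  vret := fun q a og q' => dret q a og == q';
  vint := fun q a q' => dint q a == q' |}.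

Lemma vreach_dvpa (D : DVPA Sigma) (fin : {set dQ D}) (q : dQ D) s w q' s' :
  vreach (A := vpa_of_dvpa fin) q s w q' s' <-> foldl (@dstep D) (q, s) w = (q', s').
Proof.
split.
  by elim=> {q s w q' s'} [//|q s a w q1 g q2 s2|q g s a w q1 q2 s2|q a w q1 q2 s2
    |q s a w q1 q2 s2] ka /eqP t _ <-; rewrite /= /dstep ka /= t.
elim: w q s => [|a w IH] q s /=; first by case=> -> ->; apply: vr_nil.
rewrite [dstep (q, s) a]/dstep; case ka: (kind a).
- by case ca: (dcall q a) => [q1 g] /IH; apply: vr_call ka _; rewrite /= ca.
- by case: s => [|g s] /IH; [apply: vr_ret_bot ka _ | apply: vr_ret ka _] => /=.
- by move/IH; apply: vr_int ka _ => /=.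
Qed.

Lemma VPL_dvpa (D : DVPA Sigma) (fin : {set dQ D}) :
  VPL kind (fun w => dstate kind D w \in fin).
Proof.
exists (vpa_of_dvpa fin) => w; rewrite /dstate drunE; split.
  set c := foldl _ _ w => cfin; exists (dinit D), c.1, c.2.
  by split; [exact: set11 | split; [apply/vreach_dvpa; rewrite -surjective_pairing |]].
by move=> [i [q [s [/set1P -> [/vreach_dvpa -> qfin]]]]].
Qed.

Section Annotation.
Variables (D : DVPA Sigma) (X : finType) (x0 : X) (f : dQ D -> Sigma -> X -> X).

Definition dvpa_annot : DVPA Sigma := {|
  dQ := (dQ D * X)%type; dGam := dGam D; dinit := (dinit D, x0);
  dcall := fun q a => let: (q', g) := dcall q.1 a in ((q', f q.1 a q.2), g);
  dret := fun q a og => (dret q.1 a og, f q.1 a q.2);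
  dint := fun q a => (dint q.1 a, f q.1 a q.2) |}.

Lemma dstep_annot q x s a :
  @dstep dvpa_annot ((q, x), s) a = (((@dstep D (q, s) a).1, f q a x), (@dstep D (q, s) a).2).
Proof. by rewrite /dstep; case: (kind a) => //=; [case: (dcall q a) | case: s]. Qed.

Lemma dstate_annot (obs : seq Sigma -> X) :
  obs [::] = x0 -> (forall w a, obs (rcons w a) = f (dstate kind D w) a (obs w)) ->
  forall w, dstate kind dvpa_annot w = (dstate kind D w, obs w).
Proof.
move=> obs0 obsS.
suff conf w : foldl (@dstep dvpa_annot) (dinit dvpa_annot, [::]) w =
    ((dstate kind D w, obs w), (foldl (@dstep D) (dinit D, [::]) w).2).
  by move=> w; rewrite /dstate drunE conf.
elim/last_ind: w => [|w a IH]; first by rewrite obs0.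
rewrite !foldl_rcons IH dstep_annot obsS /dstate !drunE foldl_rcons.
by rewrite -surjective_pairing.
Qed.

End Annotation.

Section Nesting.
Variable side : Sigma -> bool.

Definition wn_dvpa : DVPA Sigma := {|
  dQ := bool; dGam := bool; dinit := true;
  dcall := fun q a => (q, side a);
  dret := fun q a og => q && (if og is Some b then b == side a else true);
  dint := fun q a => q |}.

Lemma drun_wn_dvpa q st w :
  drun kind (A := wn_dvpa) q (map side st) w = q && wn_aux kind side st w.
Proof.
elim: w q st => [|a w IH] q st /=; first by rewrite andbT.
case: (kind a) => //=; first exact: (IH q (a :: st)).
by case: st => [|c st] /=; [rewrite andbT; exact: (IH q [::]) | rewrite IH andbA].
Qed.

Lemma VPL_well_nested : VPL kind (well_nested kind side).
Proof.
apply: VPL_ext (VPL_dvpa (D := wn_dvpa) [set true]) => w.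
by move: (drun_wn_dvpa true [::] w) => /= wnE; rewrite inE /dstate wnE eqb_id.
Qed.

Section Lift.
Variables (S : finType) (k : S -> vkind) (p : Sigma -> option S) (b : bool).
Hypothesis kind_p : forall x y, p x = Some y -> kind x = k y.
Hypothesis p_side : forall x, isSome (p x) = (side x == b).

(* Calls outside the domain of [p] push [None]; on words nested w.r.t. [side]
   these are popped exactly by the returns outside the domain of [p]. *)
Definition vpa_lift (A : VPA S) : VPA Sigma := {|
  vQ := vQ A; vGam := option (vGam A); vinit := vinit A; vfinal := vfinal A;
  vcall := fun q x q' og =>
    if p x is Some y then (if og is Some g then vcall q y q' g else false)
    else (q' == q) && (og == None);
  vret := fun q x oog q' =>
    if p x is Some y then
      match oog with
      | Some (Some g) => vret q y (Some g) q'
      | Some None => false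
      | None => vret q y None q'
      end
    else (q' == q) && (if oog is Some (Some _) then false else true);
  vint := fun q x q' => if p x is Some y then vint q y q' else q' == q |}.

Lemma vreach_lift_proj (A : VPA S) (q : vQ A) st w q' st' :
  vreach (A := vpa_lift A) q st w q' st' ->
  Defs.vreach k q (pmap id st) (pmap p w) q' (pmap id st').
Proof.
elim=> {q st w q' st'} [q s|q s a w q1 g q2 s2|q g s a w q1 q2 s2|q a w q1 q2 s2
  |q s a w q1 q2 s2]; first exact: vr_nil.
all: rewrite /=; case pa: (p a) => [y|] ka; rewrite ?(kind_p pa) in ka.
- by case: g => [g|] // t _; apply: vr_call ka t.
- by case/andP=> /eqP -> /eqP ->.
- by case: g => [g|] // t _; apply: vr_ret ka t.
- by case: g => [g|] // /andP [/eqP ->].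
- by move=> t _; apply: vr_ret_bot ka t.
- by case/andP=> /eqP ->.
- by move=> t _; apply: vr_int ka t.
- by move/eqP ->.
Qed.

Lemma lift_stack_top (T : Type) (st : seq (option T)) c ls a :
  map (fun x => isSome (p x)) (c :: ls) = map isSome st -> side c == side a ->
  exists o st0, [/\ st = o :: st0, isSome o = isSome (p a)
                 & map (fun x => isSome (p x)) ls = map isSome st0].
Proof.
case: st => [//|o st0] [co compat] /eqP ca.
by exists o, st0; rewrite -co !p_side ca.
Qed.

Lemma vreach_lift_nested (A : VPA S) (q : vQ A) st ls w q' s' :
  Defs.vreach k q (pmap id st) (pmap p w) q' s' ->
  map (fun x => isSome (p x)) ls = map isSome st -> wn_aux kind side ls w ->
  exists2 st', vreach (A := vpa_lift A) q st w q' st' & pmap id st' = s'.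
Proof.
elim: w q st ls => [|a w IH] q st ls.
  by move=> /vreach_nilE [-> ->] _ _; exists st => //; apply: vr_nil.
rewrite /=; case pa: (p a) => [y|]; case ka: (kind a) => /=.
- move=> /vreach_consE; rewrite -(kind_p pa) ka => -[q1 [g [t r]]] compat wn.
  have [|st' r' <-] := IH q1 (Some g :: st) (a :: ls) r _ wn; first by rewrite /= pa compat.
  by exists st' => //; apply: vr_call ka _ r'; rewrite /= pa.
- case: ls => [|c ls] + compat.
    case: st compat => [|//] _ /vreach_consE; rewrite -(kind_p pa) ka => -[q1 [t r]] wn.
    have [st' r' <-] := IH q1 [::] [::] r erefl wn.
    by exists st' => //; apply: vr_ret_bot ka _ r'; rewrite /= pa.
  move=> + /andP [/(lift_stack_top compat) [[g|] [st0 [est /= ga {}compat]]] wn];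
    rewrite pa // in ga; rewrite est.
  move=> /vreach_consE; rewrite -(kind_p pa) ka /= => -[q1 [t r]].
  have [st' r' <-] := IH q1 st0 ls r compat wn.
  by exists st' => //; apply: vr_ret ka _ r'; rewrite /= pa.
- move=> /vreach_consE; rewrite -(kind_p pa) ka => -[q1 [t r]] compat wn.
  have [st' r' <-] := IH q1 st ls r compat wn.
  by exists st' => //; apply: vr_int ka _ r'; rewrite /= pa.
- move=> r compat wn.
  have [|st' r' <-] := IH q (None :: st) (a :: ls) r _ wn; first by rewrite /= pa compat.
  by exists st' => //; apply: vr_call ka _ r'; rewrite /= pa !eqxx.
- case: ls => [|c ls] + compat.
    case: st compat => [|//] _ r wn; have [st' r' <-] := IH q [::] [::] r erefl wn.
    by exists st' => //; apply: vr_ret_bot ka _ r'; rewrite /= pa eqxx.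
  move=> + /andP [/(lift_stack_top compat) [[g|] [st0 [est /= ga {}compat]]] wn];
    rewrite pa // in ga; rewrite est.
  move=> r; have [st' r' <-] := IH q st0 ls r compat wn.
  by exists st' => //; apply: vr_ret ka _ r'; rewrite /= pa eqxx.
- move=> r compat wn; have [st' r' <-] := IH q st ls r compat wn.
  by exists st' => //; apply: vr_int ka _ r'; rewrite /= pa.
Qed.

Lemma VPL_lift (L : seq S -> Prop) :
  VPL k L -> VPL kind (fun w => L (pmap p w) /\ well_nested kind side w).
Proof.
move=> [A HA].
have liftA : VPL kind (vaccepts kind (vpa_lift A)) by exists (vpa_lift A).
apply: VPL_ext (VPL_inter liftA VPL_well_nested) => w; split=> -[acc wn]; split=> //.
  apply/HA; move: acc => [i [f [st [iA [/vreach_lift_proj r fA]]]]].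
  by exists i, f, (pmap id st).
move/HA: acc => [i [f [s [iA [r fA]]]]].
have [st' r' _] := vreach_lift_nested (st := [::]) (ls := [::]) r erefl wn.
by exists i, f, st'.
Qed.

End Lift.

End Nesting.

End VisiblyPushdown.

Section Traces.
Variables (S1 S2 : finType) (k1 : S1 -> vkind) (k2 : S2 -> vkind).
Local Notation Sig := (S1 + S2)%type.
Local Notation kind := (sumk k1 k2).
Local Notation proj1w := (@proj1w S1 S2).
Local Notation proj2w := (@proj2w S1 S2).
Local Notation eqI := (@equivI S1 S2).
Local Notation side := (@Defs.side S1 S2).

Definition side_part (s : bool) (w : seq Sig) := [seq z <- w | side z == s].

Lemma side_part_true w : side_part true w = map inl (proj1w w).
Proof. by elim: w => [|[a|a] w IH] //=; rewrite IH. Qed.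

Lemma side_part_false w : side_part false w = map inr (proj2w w).
Proof. by elim: w => [|[a|a] w IH] //=; rewrite IH. Qed.

Lemma equivI_proj u v : eqI u v -> proj1w u = proj1w v /\ proj2w u = proj2w v.
Proof.
elim=> [//|{}u {}v w [x a b y] + _ [<- <-]].
by rewrite /indep /proj1w /proj2w !pmap_cat; case: a => a; case: b.
Qed.

Lemma equivI_side_part u v s : eqI u v -> side_part s u = side_part s v.
Proof.
by case/equivI_proj=> e1 e2; case: s; rewrite ?side_part_true ?side_part_false ?e1 ?e2.
Qed.

Lemma equivI_size u v : eqI u v -> size u = size v.
Proof. by elim=> [//|{}u {}v w [x a b y] _ _ <-]; rewrite !size_cat. Qed.

Lemma shuffle_equivI (P1 : seq S1 -> Prop) (P2 : seq S2 -> Prop) u v :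
  eqI u v -> shuffle P1 P2 v -> shuffle P1 P2 u.
Proof. by case/equivI_proj=> e1 e2; rewrite /shuffle e1 e2. Qed.

Lemma equivI_commute_block al a x y :
  all (fun z => side z != side a) x -> eqI (al ++ a :: x ++ y) (al ++ x ++ a :: y).
Proof.
elim: x al => [|c x IH] al /=; first by move=> _; apply: eqI_refl.
case/andP=> ca xa; apply: (@eqI_step _ _ _ (al ++ c :: a :: x ++ y)).
  by apply: swap1_intro; rewrite /indep eq_sym.
by have := IH (rcons al c) xa; rewrite -!cats1 -!catA.
Qed.

Variable prec : seq Sig -> rel Sig.

Definition inversion_free (pre w : seq Sig) :=
  forall al b x a y, w = al ++ b :: x ++ a :: y ->
  all (fun z => side z == side b) x -> side a != side b -> ~~ prec (pre ++ al) a b.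

Lemma red_inversion_free (L : seq Sig -> Prop) w :
  (forall u v, eqI u v -> L v -> L u) -> red prec eqI L w -> inversion_free [::] w.
Proof.
move=> Lclosed [Lw wmin] al b x a y ew xb ab; apply/negP=> ltab.
set u := al ++ a :: (b :: x) ++ y.
have uw : eqI u w.
  rewrite /u ew; apply: equivI_commute_block => /=; rewrite eq_sym ab /=.
  by apply/allP=> z /(allP xb) /eqP ->; rewrite eq_sym.
have /wmin : preceq prec u w.
  by right; exists al, a, ((b :: x) ++ y), b, (x ++ a :: y); rewrite ew.
move=> /(_ (Lclosed _ _ uw Lw) uw) /eqP; rewrite /u ew eqseq_cat // => /andP [_ /eqP [ba _]].
by move: ab; rewrite ba eqxx.
Qed.

Lemma inversion_free_red (L : seq Sig -> Prop) w :
  contextual_order prec -> L w -> inversion_free [::] w -> red prec eqI L w.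
Proof.
move=> hctx Lw wfree; split=> // u _ uw [].
  case/prefixP=> t et; move: (equivI_size uw); rewrite et size_cat.
  by move/eqP; rewrite -{1}[size u]addn0 eqn_add2l eq_sym size_eq0 => /eqP ->; rewrite cats0.
case=> al [a [be [b [ga [eu [ew ltab]]]]]].
have [irr _] := hctx al.
have := equivI_side_part (side a) uw; rewrite eu ew /side_part !filter_cat /= eqxx.
case sab: (side a == side b).
  rewrite (eqP sab) eqxx => /eqP; rewrite eqseq_cat // => /andP [_ /eqP [ab _]].
  by move: ltab; rewrite ab irr.
rewrite eq_sym sab => /eqP; rewrite eqseq_cat // => /andP [_ /eqP /esym ega].
have [x [y [gaE xa _]]] := filter_eq_cons ega.
suff : ~~ prec ([::] ++ al) a b by rewrite /= ltab.
apply: (wfree al b x a y); first by rewrite ew gaE.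
  apply/allP=> z /(allP xa) /=; move: sab.
  by case: (side z); case: (side a); case: (side b).
by rewrite sab.
Qed.

Lemma shuffle_side_part_matched (P1 : seq S1 -> Prop) (P2 : seq S2 -> Prop) w :
  (forall w, P1 w -> well_matched k1 w) -> (forall w, P2 w -> well_matched k2 w) ->
  shuffle P1 P2 w -> forall s, pend_aux kind [::] (side_part s w) = [::].
Proof.
move=> wm1 wm2 [/wm1 /andP [/eqP p1 _] /wm2 /andP [/eqP p2 _]] [].
  rewrite side_part_true -[[::]]/(map inl [::]) (@pend_aux_map _ _ k1 kind inl) //.
  by rewrite -[pend_aux _ _ _]/(pending_calls _ _) p1.
rewrite side_part_false -[[::]]/(map inr [::]) (@pend_aux_map _ _ k2 kind inr) //.
by rewrite -[pend_aux _ _ _]/(pending_calls _ _) p2.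
Qed.

Section Coherence.
Hypothesis hcoh : coherent k1 k2 prec.
Variable w : seq Sig.
Hypothesis wfree : inversion_free [::] w.
Hypothesis wmatched : forall s, pend_aux kind [::] (side_part s w) = [::].

(* The [side c]-projection is well-matched, so a letter [a'] of that side
   follows [a] after a block of [a]-side letters, and coherence gives
   [a' ≺ a] in the context [u]: an inversion. *)
Lemma pending_call_side u a v c st :
  w = u ++ a :: v -> wn_aux kind side [::] u -> kind a = VRet ->
  pend_aux kind [::] u = c :: st -> side c = side a.
Proof.
move=> ew wnu ka pu; apply/eqP/negPn/negP => ca.
have := filter_pend_aux (side c) wnu; rewrite pu /= eqxx => pus.
have := wmatched (side c); rewrite ew /side_part filter_cat pend_aux_cat -pus /=.
rewrite eq_sym (negbTE ca); case ev: [seq z <- v | side z == side c] => [//|a' t] _.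
have [x [y [ev' xc a'c]]] := filter_eq_cons ev.
suff /negP[] : ~~ prec ([::] ++ u) a' a.
  by apply: (@hcoh u c st pu a' a (eqP a'c) ka); rewrite eq_sym.
apply: (@wfree u a x a' y).
- by rewrite ew ev'.
- apply/allP => z /(allP xc) /=; move: ca; rewrite eq_sym.
  by case: (side z); case: (side a); case: (side c).
by move: ca a'c; rewrite eq_sym => /negbTE; case: (side a'); case: (side a); case: (side c).
Qed.

Lemma inversion_free_well_nested : well_nested kind side w.
Proof.
suff wn_suffix v u : w = u ++ v -> wn_aux kind side [::] u ->
    wn_aux kind side (pend_aux kind [::] u) v by exact: (wn_suffix w [::]).
elim: v u => [//|a v IH] u ew wnu.
have wna : wn_aux kind side (pend_aux kind [::] u) [:: a].
  rewrite /=; case ka: (kind a) => //; case pu: (pend_aux kind [::] u) => [//|c st].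
  by rewrite (pending_call_side ew wnu ka pu) eqxx.
rewrite -cat1s wn_aux_cat wna -pend_aux_cat; apply: IH; first by rewrite ew -catA.
by rewrite wn_aux_cat wnu wna.
Qed.

End Coherence.

(* [sd] is the side of the current block and [F] the set of letters [z] with
   [z ≺ b] in the context of some letter [b] of the block: the letters that may
   not start the next block. *)
Definition block_step (o : rel Sig) (sF : bool * {set Sig}) (a : Sig) :
    option (bool * {set Sig}) :=
  let: (sd, F) := sF in
  if side a == sd then Some (sd, F :|: [set z | o z a])
  else if a \in F then None else Some (side a, [set z | o z a]).

Fixpoint block_scan (pre : seq Sig) (st : option (bool * {set Sig})) (w : seq Sig) :=
  if w is a :: w' then block_scan (rcons pre a) (obind (block_step (prec pre) ^~ a) st) w'
  else st.

Lemma block_scan_None pre w : block_scan pre None w = None.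
Proof. by elim: w pre => //= a w IH pre; rewrite IH. Qed.

Lemma block_scan_rcons pre st w a :
  block_scan pre st (rcons w a) =
    obind (block_step (prec (pre ++ w)) ^~ a) (block_scan pre st w).
Proof. by elim: w pre st => [|b w IH] pre st /=; rewrite ?cats0 // IH cat_rcons. Qed.

Definition block_ok (F : {set Sig}) (sd : bool) (w : seq Sig) :=
  forall x a y, w = x ++ a :: y ->
  all (fun z => side z == sd) x -> side a != sd -> a \notin F.

Lemma block_ok_same F sd a w : side a == sd -> block_ok F sd (a :: w) <-> block_ok F sd w.
Proof.
move=> asd; split=> ok.
  by move=> x b y ew xsd bsd; apply: (ok (a :: x) b y); rewrite /= ?ew ?asd.
move=> [|c x] b y /= [<- ew]; first by rewrite asd.
by case/andP=> _ xsd; apply: ok ew xsd.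
Qed.

Lemma block_ok_diff F sd a w : side a != sd -> block_ok F sd (a :: w) <-> a \notin F.
Proof.
move=> asd; split=> [ok|aF]; first exact: (ok [::] a w).
move=> [|c x] b y /= [<- ew] //.
by case/andP=> csd; move: asd; rewrite csd.
Qed.

Lemma block_okU F F' sd w : block_ok (F :|: F') sd w <-> block_ok F sd w /\ block_ok F' sd w.
Proof.
split=> [ok|[ok ok'] x a y ew xsd asd].
  by split=> x a y ew xsd asd; move: (ok x a y ew xsd asd);
    rewrite in_setU negb_or => /andP [].
by rewrite in_setU negb_or (ok x a y) ?(ok' x a y).
Qed.

Lemma inversion_free_cons pre a w : inversion_free pre (a :: w) <->
  block_ok [set z | prec pre z a] (side a) w /\ inversion_free (rcons pre a) w.
Proof.
split=> [wfree|[ok wfree]].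
  split=> [x b y ew xa ba | al b x c y ew xb cb].
    by rewrite inE; have := wfree [::] a x b y; rewrite cats0 ew; apply.
  by have := wfree (a :: al) b x c y; rewrite ew cat_rcons; apply.
move=> [|d al] b x c y /= [<- ew] xb cb.
  by rewrite cats0; have := ok x c y ew xb cb; rewrite inE.
by have := wfree al b x c y ew xb cb; rewrite cat_rcons.
Qed.

Lemma block_scanP pre sd F w :
  block_scan pre (Some (sd, F)) w <-> block_ok F sd w /\ inversion_free pre w.
Proof.
elim: w pre sd F => [|a w IH] pre sd F /=.
  by split=> // _; split=> [[|? ?] | [|? ?]].
case: ifP => asd.
  rewrite IH inversion_free_cons block_okU block_ok_same // (eqP asd).
  by split=> [[[? ?] ?]|[? [? ?]]].
case: ifP => aF.
  by rewrite block_scan_None; split=> // -[]; rewrite block_ok_diff ?asd // aF.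
rewrite IH inversion_free_cons block_ok_diff ?asd // aF.
by split=> [[? ?]|[_ [? ?]]].
Qed.

Lemma VPL_inversion_free : vp_order kind prec -> VPL kind (inversion_free [::]).
Proof.
case=> D [ord [_ precE]].
pose f q a (st : option (bool * {set Sig})) := obind (block_step (ord q) ^~ a) st.
pose st0 := Some (true, set0 : {set Sig}).
have annotE w : dstate kind (dvpa_annot st0 f) w = (dstate kind D w, block_scan [::] st0 w).
  by apply: dstate_annot => // v a; rewrite block_scan_rcons precE.
apply: VPL_ext (@VPL_dvpa _ kind (dvpa_annot st0 f) [set q | isSome q.2]) => w.
rewrite /= inE annotE /= block_scanP.
by split=> [[] | wfree] //; split=> // x a y _ _ _; rewrite inE.
Qed.

End Traces.

Theorem theorem3p18 (S1 S2 : finType) (k1 : S1 -> vkind) (k2 : S2 -> vkind)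
  (P1 : seq S1 -> Prop) (P2 : seq S2 -> Prop)
  (hP1 : VPL k1 P1) (wm1 : forall w, P1 w -> well_matched k1 w)
  (hP2 : VPL k2 P2) (wm2 : forall w, P2 w -> well_matched k2 w)
  (prec : seq (S1 + S2) -> rel (S1 + S2))
  (hctx : contextual_order prec)
  (hvp : vp_order (sumk k1 k2) prec)
  (hcoh : coherent k1 k2 prec) :
  VPL (sumk k1 k2) (red prec (@equivI S1 S2) (shuffle P1 P2)) /\
  (forall w, red prec (@equivI S1 S2) (shuffle P1 P2) w ->
     well_nested (sumk k1 k2) (@side S1 S2) w).
Proof.
have red_free w : red prec (@equivI S1 S2) (shuffle P1 P2) w -> inversion_free prec [::] w.
  exact: red_inversion_free (@shuffle_equivI _ _ P1 P2).
have red_wn w : red prec (@equivI S1 S2) (shuffle P1 P2) w ->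
    well_nested (sumk k1 k2) (@side S1 S2) w.
  move=> rw; apply: (inversion_free_well_nested hcoh (red_free w rw)).
  by case: rw => sw _; exact: shuffle_side_part_matched wm1 wm2 sw.
split=> //.
have lift1 : VPL (sumk k1 k2)
    (fun w => P1 (proj1w w) /\ well_nested (sumk k1 k2) (@side S1 S2) w).
  by apply: (VPL_lift (p := @getl S1 S2) (b := true)) hP1 => -[] //= x y [<-].
have lift2 : VPL (sumk k1 k2)
    (fun w => P2 (proj2w w) /\ well_nested (sumk k1 k2) (@side S1 S2) w).
  by apply: (VPL_lift (p := @getr S1 S2) (b := false)) hP2 => -[] //= x y [<-].
apply: VPL_ext (VPL_inter (VPL_inter lift1 lift2) (VPL_inversion_free hvp)) => w.
split=> [[[[p1 _] [p2 _]] wfree] | rw]; first exact: inversion_free_red.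
have [[p1 p2] _] := rw; have wn := red_wn w rw.
by split; [split | exact: red_free].
Qed.
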